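(* Let $N\ge2$, $m>0$, $a_0>0$. For each large integer $K$ let $R>0$ be such that $d=2R\sin\frac\pi K$ satisfies $$a_0mR^{-m-1}=2\sin\frac{\pi}{K}\,\Psi(d),$$ and assume $d\to+\infty$ as $K\to\infty$. Then, as $K\to\infty$, $$d=m\ln K+\Big(m-\frac{N-3}{2}\Big)\ln(m\ln K)+O(1),$$ $$R=\frac{m}{2\pi}K\ln K+\frac{1}{2\pi}\Big(m-\frac{N-3}{2}\Big)K\ln(m\ln K)+O(K).$$
   Context: $w$ is the unique positive radial $H^1$ solution of $-\Delta w+w-w^p=0$ in $\mathbb{R}^N$ ($1<p$, $p<\frac{N+2}{N-2}$ if $N\ge3$), and $\Psi(s)=-\int_{\mathbb{R}^N}w(x-s\vec e)\,\mathrm{div}(w^p(x)\vec e)\,dx$ for a unit vector $\vec e$. One uses that $\Psi(s)=c_{N,p}s^{-\frac{N-1}{2}}e^{-s}(1+O(s^{-1}))$ as $s\to\infty$ for a constant $c_{N,p}>0$. *)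

From Stdlib Require Import Reals Lra.
Open Scope R_scope.

Definition Psi_asymp (N : nat) (Psi : R -> R) : Prop :=
  exists c : R, 0 < c /\
  exists C s0 : R, 0 < s0 /\
    forall s : R, s0 <= s ->
      Rabs (Psi s - c * Rpower s (- (INR N - 1) / 2) * exp (- s))
        <= C * (c * Rpower s (- (INR N - 1) / 2) * exp (- s)) / s.

Definition dK (Rs : nat -> R) (K : nat) : R := 2 * Rs K * sin (PI / INR K).

From Stdlib Require Import Reals Lra Lia.
From Coquelicot Require Import Rcomplements.
Open Scope R_scope.

(* Write s = sin(pi/K), d = 2 R s, q = (N-1)/2 and al = m + 1 - q
   = m - (N-3)/2.  Taking logarithms in the balance law
   a0 m R^{-m-1} = 2 s Psi(d) and inserting ln Psi(d) = ln c - q ln d - d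
   + O(1) gives the transcendental equation
       d - al ln d = m ln K + O(1),
   the O(1) being uniform because K s stays in [1, 4].  Since d and
   L = m ln K are then comparable, ln d = ln L + O(1), whence
       d = L + al ln L + O(1).
   Finally R = d / (2 s) with 1/(2 s) = K/(2 pi) + O(1/K) and L = O(K)
   give R = K (L + al ln L) / (2 pi) + O(K). *)

(* ln y < y for every y > 0, since e^y >= 1 + y > y. *)
Lemma ln_lt_id (y : R) : 0 < y -> ln y < y.
Proof.
intros hy. rewrite <- (ln_exp y) at 2.
apply ln_increasing; [exact hy|]. pose proof (exp_ineq1_le y). lra.
Qed.

Lemma ln_nonneg (y : R) : 1 <= y -> 0 <= ln y.
Proof. intros hy. rewrite <- ln_1. apply ln_le; lra. Qed.

Lemma sin_ge_cubic (x : R) : 0 <= x -> x <= PI -> x - x ^ 3 / 6 <= sin x.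
Proof.
intros h0 h1. destruct (sin_bound x 0 h0 h1) as [H _].
unfold sin_approx, sin_term in H. simpl in H. lra.
Qed.

Lemma k_sin_pi_over_k (k : R) : 2 <= k ->
  0 < sin (PI / k) /\ 1 <= k * sin (PI / k) <= 4.
Proof.
intros hk. pose proof PI_RGT_0. pose proof PI_4. pose proof PI2_3_2.
set (x := PI / k).
assert (hkx : k * x = PI) by (unfold x; field; lra).
assert (hx0 : 0 < x) by (unfold x; apply Rdiv_lt_0_compat; lra).
assert (hx2 : x <= 2) by nra.
assert (hup : sin x < x) by (apply sin_lt_x; lra).
assert (hlo : x - x ^ 3 / 6 <= sin x) by (apply sin_ge_cubic; nra).
repeat split; nra.
Qed.

(* 1/(2 sin(pi/k)) = k/(2 pi) + O(1/k), with an explicit constant: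
   k (pi/k - sin(pi/k)) <= pi^3 / (6 k^2). *)
Lemma inv_two_sin_pi_over_k (k : R) : 2 <= k ->
  0 <= 1 / (2 * sin (PI / k)) - k / (2 * PI) <= 2 / k.
Proof.
intros hk. pose proof PI_RGT_0. pose proof PI_4.
destruct (k_sin_pi_over_k k hk) as [hs [hks1 hks4]].
set (x := PI / k) in *. set (s := sin x) in *.
assert (hkx : k * x = PI) by (unfold x; field; lra).
assert (hx0 : 0 < x) by (unfold x; apply Rdiv_lt_0_compat; lra).
assert (hsx : s < x) by (apply sin_lt_x; lra).
assert (hlo : x - x ^ 3 / 6 <= s) by (apply sin_ge_cubic; nra).
assert (hdiff : 1 / (2 * s) - k / (2 * PI) = (PI - k * s) / (2 * PI * s))
  by (field; lra).
assert (hgap : (PI - k * s) * k <= PI ^ 2 * x / 6).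
{ replace (PI - k * s) with (k * (x - s)) by lra.
  replace (PI ^ 2 * x / 6) with (k * (x ^ 3 / 6) * k)
    by (rewrite <- hkx; field; lra).
  apply Rmult_le_compat_r; [lra|]. apply Rmult_le_compat_l; lra. }
rewrite hdiff. split.
- apply Rdiv_le_0_compat; nra.
- apply (Rmult_le_reg_r (2 * PI * s * k)); [nra|].
  replace ((PI - k * s) / (2 * PI * s) * (2 * PI * s * k))
    with ((PI - k * s) * k) by (field; lra).
  replace (2 / k * (2 * PI * s * k)) with (4 * PI * s) by (field; lra).
  nra.
Qed.

(* Logarithmic form of the asymptotics of Psi: for large s, Psi(s) is
   within a factor 2 of c s^{-q} e^{-s}, q = (N-1)/2, hence positive and
   ln Psi(s) = ln c - q ln s - s up to ln 2. *)
Lemma Psi_asymp_log (N : nat) (Psi : R -> R) : Psi_asymp N Psi ->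
  exists c D : R, 0 < c /\ forall s : R, D <= s ->
    0 < Psi s /\
    Rabs (ln (Psi s) - (ln c - (INR N - 1) / 2 * ln s - s)) <= ln 2.
Proof.
intros [c [hc [C [s0 [hs0 HP]]]]].
exists c, (s0 + 2 * Rabs C). split; [exact hc|]. intros s hs.
specialize (HP s ltac:(pose proof (Rabs_pos C); lra)).
pose proof (Rabs_pos C) as hC0. pose proof (Rle_abs C) as hC.
set (M := c * Rpower s (- (INR N - 1) / 2) * exp (- s)) in HP.
assert (hM : 0 < M).
{ unfold M, Rpower. pose proof (exp_pos (- (INR N - 1) / 2 * ln s)).
  pose proof (exp_pos (- s)). apply Rmult_lt_0_compat; [nra|lra]. }
assert (hrel : C * M / s <= M / 2).
{ apply (Rmult_le_reg_r s); [lra|].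
  replace (C * M / s * s) with (C * M) by (field; lra). nra. }
apply Rabs_le_between in HP.
assert (hlnM : ln M = ln c - (INR N - 1) / 2 * ln s - s).
{ unfold M, Rpower. rewrite !ln_mult, !ln_exp; try lra; try apply exp_pos.
  apply Rmult_lt_0_compat; [lra|apply exp_pos]. }
assert (hP : M / 2 <= Psi s <= 2 * M) by lra.
split; [lra|].
rewrite <- hlnM. apply Rabs_le_between. split.
- assert (ln (M / 2) <= ln (Psi s)) by (apply ln_le; lra).
  rewrite ln_div in *; lra.
- assert (ln (Psi s) <= ln (2 * M)) by (apply ln_le; lra).
  rewrite ln_mult in *; lra.
Qed.

Lemma balance_log_form (m a0 Rk s P : R) :
  0 < a0 * m -> 0 < Rk -> 0 < s -> 0 < P ->
  a0 * m * Rpower Rk (- m - 1) = 2 * s * P ->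
  ln P = ln (a0 * m) - (m + 1) * ln (2 * Rk * s) + m * ln (2 * s).
Proof.
intros ha hR hs hP heq.
assert (hlog : ln (a0 * m) + (- m - 1) * ln Rk = ln 2 + ln s + ln P).
{ rewrite <- ln_Rpower, <- !ln_mult, heq; try easy; try lra.
  unfold Rpower; apply exp_pos. }
rewrite (ln_mult (2 * Rk) s), (ln_mult 2 Rk), (ln_mult 2 s) by lra.
lra.
Qed.

Definition log_error (m a0 c : R) : R :=
  Rabs (ln c) + ln 2 + Rabs (ln (a0 * m)) + m * ln 8.

(* At a fixed K = k, the balance law together with the logarithmic
   asymptotics of Psi at d gives d - (m + 1 - q) ln d = m ln k + O(1);
   the error collects ln c, ln (a0 m), the factor-2 slack of Psi and
   m ln (2 k sin(pi/k)), which lies in [0, m ln 8]. *)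
Lemma transcendental_equation (m a0 c q k Rk P : R) :
  0 < m -> 0 < a0 -> 2 <= k -> 0 < Rk -> 0 < P ->
  a0 * m * Rpower Rk (- m - 1) = 2 * sin (PI / k) * P ->
  Rabs (ln P - (ln c - q * ln (2 * Rk * sin (PI / k)) - 2 * Rk * sin (PI / k)))
    <= ln 2 ->
  Rabs (2 * Rk * sin (PI / k) - (m + 1 - q) * ln (2 * Rk * sin (PI / k))
        - m * ln k) <= log_error m a0 c.
Proof.
intros hm ha0 hk hR hP heq hPsi.
destruct (k_sin_pi_over_k k hk) as [hs hks].
set (s := sin (PI / k)) in *. set (d := 2 * Rk * s) in *.
assert (hlnP := balance_log_form m a0 Rk s P ltac:(nra) hR hs hP heq).
fold d in hlnP.
assert (hchord : 0 <= ln (2 * (k * s)) <= ln 8).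
{ split; [apply ln_nonneg; lra | apply ln_le; lra]. }
assert (hsplit : ln (2 * (k * s)) = ln (2 * s) + ln k)
  by (rewrite !ln_mult; lra).
replace (d - (m + 1 - q) * ln d - m * ln k)
  with ((ln P - (ln c - q * ln d - d)) + ln c - ln (a0 * m)
        - m * ln (2 * (k * s))) by (rewrite hsplit, hlnP; ring).
apply Rabs_le_between in hPsi.
pose proof (Rabs_le_between (ln c) (Rabs (ln c))) as [hc _].
pose proof (Rabs_le_between (ln (a0 * m)) (Rabs (ln (a0 * m)))) as [ha _].
specialize (hc (Rle_refl _)). specialize (ha (Rle_refl _)).
apply Rabs_le_between. unfold log_error. nra.
Qed.

(* Once d >= 16 a^2 (and d >= 1), the logarithmic term a ln d is at most
   d / 2: indeed |a| ln d = 2 |a| ln (sqrt d) < 2 |a| sqrt d <= d / 2. *)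
Lemma log_term_le_half (a d : R) : 1 <= d -> 16 * a ^ 2 <= d ->
  Rabs (a * ln d) <= d / 2.
Proof.
intros hd1 hda.
assert (hr0 : 0 < sqrt d) by (apply sqrt_lt_R0; lra).
assert (hrr : sqrt d * sqrt d = d) by (apply sqrt_sqrt; lra).
assert (hlnd : ln d = 2 * ln (sqrt d)) by (rewrite <- hrr at 1; rewrite ln_mult; lra).
assert (hlr : ln (sqrt d) < sqrt d) by (apply ln_lt_id; lra).
assert (hln0 : 0 <= ln d) by (apply ln_nonneg; lra).
assert (ha2 : Rabs a ^ 2 = a ^ 2) by apply pow2_abs.
pose proof (Rabs_pos a).
assert (h4 : 4 * Rabs a <= sqrt d) by nra.
rewrite Rabs_mult, (Rabs_right (ln d)) by lra. nra.
Qed.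

(* Inversion of d - a ln d: if d - a ln d = L + O(B) with d and L large,
   then d = L + a ln L + O(1), because d and L are comparable
   (L <= 3 d <= 6 (1 + B) L), so ln d - ln L is bounded. *)
Lemma invert_d_minus_log (a B d L : R) :
  1 <= d -> 16 * a ^ 2 <= d -> 1 <= L -> 2 * B <= L ->
  Rabs (d - a * ln d - L) <= B ->
  Rabs (d - (L + a * ln L)) <= B + Rabs a * (ln 3 + ln (2 * (1 + B))).
Proof.
intros hd1 hda hL1 hLB hE.
assert (hB : 0 <= B) by (eapply Rle_trans; [apply Rabs_pos|exact hE]).
apply Rabs_le_between in hE.
pose proof (log_term_le_half a d hd1 hda) as hlog.
apply Rabs_le_between in hlog.
assert (hdL : d <= 2 * (1 + B) * L) by nra.
assert (hLd : L <= 3 * d) by lra.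
assert (hup : ln d <= ln (2 * (1 + B)) + ln L).
{ rewrite <- ln_mult by lra. apply ln_le; lra. }
assert (hlo : ln L <= ln 3 + ln d).
{ rewrite <- ln_mult by lra. apply ln_le; lra. }
assert (h3 : 0 <= ln 3) by (apply ln_nonneg; lra).
assert (h2B : 0 <= ln (2 * (1 + B))) by (apply ln_nonneg; lra).
replace (d - (L + a * ln L)) with ((d - a * ln d - L) + a * (ln d - ln L))
  by ring.
eapply Rle_trans; [apply Rabs_triang|].
apply Rplus_le_compat; [apply Rabs_le_between; lra|].
rewrite Rabs_mult. apply Rmult_le_compat_l; [apply Rabs_pos|].
apply Rabs_le_between; lra.
Qed.

Lemma main_term_bound (m a k : R) : 0 < m -> 0 < k -> 1 <= m * ln k ->
  Rabs (m * ln k + a * ln (m * ln k)) <= (1 + Rabs a) * m * k.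
Proof.
intros hm hk hL.
assert (hlnL : 0 <= ln (m * ln k) < m * ln k)
  by (split; [apply ln_nonneg | apply ln_lt_id]; lra).
assert (hlk : ln k < k) by (apply ln_lt_id; lra).
pose proof (Rabs_pos a).
eapply Rle_trans; [apply Rabs_triang|].
rewrite (Rabs_mult a), (Rabs_right (m * ln k)), (Rabs_right (ln (m * ln k))) by lra.
assert (hLk : m * ln k <= m * k) by nra.
assert (Rabs a * ln (m * ln k) <= Rabs a * (m * k)) by nra.
nra.
Qed.

(* Transfer from d = 2 R sin(pi/k) to R: if d = T + O(C1) and T = O(A k),
   then R = k T / (2 pi) + O((C1 + A) k), using
   1/(2 sin(pi/k)) <= k/2 and 1/(2 sin(pi/k)) - k/(2 pi) = O(1/k). *)
Lemma radius_from_d (k Rk T C1 A : R) : 2 <= k ->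
  Rabs (2 * Rk * sin (PI / k) - T) <= C1 -> Rabs T <= A * k ->
  Rabs (Rk - k * T / (2 * PI)) <= (C1 + A) * k.
Proof.
intros hk hdT hT. pose proof PI_RGT_0.
destruct (k_sin_pi_over_k k hk) as [hs hks].
pose proof (inv_two_sin_pi_over_k k hk) as hgap.
set (s := sin (PI / k)) in *.
assert (hC1 : 0 <= C1) by (eapply Rle_trans; [apply Rabs_pos|exact hdT]).
assert (hA : 0 <= A * k) by (eapply Rle_trans; [apply Rabs_pos|exact hT]).
assert (hinv : 0 < 1 / (2 * s) <= k / 2).
{ split; [apply Rdiv_lt_0_compat; lra|].
  apply (Rmult_le_reg_r (2 * s)); [lra|].
  replace (1 / (2 * s) * (2 * s)) with 1 by (field; lra). nra. }
replace (Rk - k * T / (2 * PI))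
  with ((2 * Rk * s - T) * (1 / (2 * s)) + T * (1 / (2 * s) - k / (2 * PI)))
  by (field; lra).
eapply Rle_trans; [apply Rabs_triang|].
rewrite !Rabs_mult, (Rabs_right (1 / (2 * s))), (Rabs_right (1 / (2 * s) - k / (2 * PI)))
  by lra.
assert (h1 : Rabs (2 * Rk * s - T) * (1 / (2 * s)) <= C1 * (k / 2)).
{ apply Rmult_le_compat; try lra; apply Rabs_pos. }
assert (h2 : Rabs T * (1 / (2 * s) - k / (2 * PI)) <= A * k * (2 / k)).
{ apply Rmult_le_compat; try lra; apply Rabs_pos. }
replace (A * k * (2 / k)) with (2 * A) in h2 by (field; lra).
nra.
Qed.

Lemma eventually_large_log (m L : R) : 0 < m ->
  exists K0 : nat, forall K : nat, (K0 <= K)%nat ->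
    2 <= INR K /\ L <= m * ln (INR K).
Proof.
intros hm. destruct (INR_unbounded (exp (L / m))) as [K3 hK3].
exists (K3 + 2)%nat. intros K hK.
assert (hK3K : INR K3 <= INR K) by (apply le_INR; lia).
assert (hK2 : INR 2 <= INR K) by (apply le_INR; lia).
simpl in hK2. split; [lra|].
assert (hln : L / m <= ln (INR K)).
{ rewrite <- (ln_exp (L / m)). apply ln_le; [apply exp_pos|lra]. }
apply (Rmult_le_compat_l m) in hln; [|lra].
replace (m * (L / m)) with L in hln by (field; lra). exact hln.
Qed.

(* Lemma 3.3. *)
Theorem lemma3p3 (N : nat) (m a0 : R) (Psi : R -> R) (Rs : nat -> R) :
  (2 <= N)%nat -> 0 < m -> 0 < a0 ->
  Psi_asymp N Psi ->
  (exists K0 : nat, forall K : nat, (K0 <= K)%nat ->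
     0 < Rs K /\
     a0 * m * Rpower (Rs K) (- m - 1) = 2 * sin (PI / INR K) * Psi (dK Rs K)) ->
  (forall M : R, exists K1 : nat, forall K : nat, (K1 <= K)%nat -> M < dK Rs K) ->
  exists (C : R) (K2 : nat), forall K : nat, (K2 <= K)%nat ->
    Rabs (dK Rs K - (m * ln (INR K)
            + (m - (INR N - 3) / 2) * ln (m * ln (INR K)))) <= C /\
    Rabs (Rs K - (m / (2 * PI) * INR K * ln (INR K)
            + 1 / (2 * PI) * (m - (INR N - 3) / 2) * INR K * ln (m * ln (INR K))))
      <= C * INR K.
Proof.
intros _ hm ha0 HPsi [K0 Hbal] Hdiv.
destruct (Psi_asymp_log N Psi HPsi) as [c [D [hc HD]]].
set (al := m - (INR N - 3) / 2).
set (B := log_error m a0 c).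
set (C1 := B + Rabs al * (ln 3 + ln (2 * (1 + B)))).
destruct (Hdiv (Rabs D + 1 + 16 * al ^ 2)) as [K1 HK1].
destruct (eventually_large_log m (1 + 2 * B) hm) as [K2 HK2].
exists (C1 + (1 + Rabs al) * m), (K0 + K1 + K2)%nat. intros K hK.
destruct (Hbal K ltac:(lia)) as [hR heq].
destruct (HK2 K ltac:(lia)) as [hk hL].
pose proof (HK1 K ltac:(lia)) as hd.
set (k := INR K) in *. set (d := dK Rs K) in *.
pose proof (Rle_abs D). pose proof (Rabs_pos D). pose proof (pow2_ge_0 al).
destruct (HD d ltac:(lra)) as [hP hlnP].
assert (hE : Rabs (d - al * ln d - m * ln k) <= B).
{ replace al with (m + 1 - (INR N - 1) / 2) by (unfold al; field).
  apply (transcendental_equation m a0 c _ k (Rs K) (Psi d)); auto. }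
assert (hB : 0 <= B) by (eapply Rle_trans; [apply Rabs_pos|exact hE]).
assert (hdT : Rabs (d - (m * ln k + al * ln (m * ln k))) <= C1)
  by (apply invert_d_minus_log; lra).
assert (hT := main_term_bound m al k hm ltac:(lra) ltac:(lra)).
pose proof (radius_from_d k (Rs K) _ C1 _ hk hdT hT) as hRk.
split.
- pose proof (Rabs_pos al). nra.
- replace (m / (2 * PI) * k * ln k + 1 / (2 * PI) * al * k * ln (m * ln k))
    with (k * (m * ln k + al * ln (m * ln k)) / (2 * PI))
    by (field; apply PI_neq0).
  exact hRk.
Qed.
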